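(* Let $G=(V,E)$ be an atomic bispanning graph with vertex-connectivity $2$, and let $\{x,y\}\subseteq V$ be a vertex cut. Then $G$ contains no edge with ends $x$ and $y$, and $G$ is the $2$-clique sum of two simple bispanning graphs: there exist simple bispanning graphs $G_1$, $G_2$ (on disjoint vertex and edge sets) with edges $d_1$ of $G_1$ and $d_2$ of $G_2$ such that $G$ is obtained from the disjoint union of $G_1$ and $G_2$ by identifying the two ends of $d_1$ with the two ends of $d_2$ and deleting $d_1$ and $d_2$.
   Context: Graphs are finite, undirected, may have parallel edges, no loops; simple means no parallel edges. A spanning tree of $G$ is $T\subseteq E$ with $(V,T)$ connected and acyclic; $G$ is bispanning if $E$ is the union of two disjoint spanning trees. A bispanning graph is atomic if its only bispanning subgraphs are itself and single vertices. A vertex cut is a vertex set whose deletion increases the number of connected components; vertex-connectivity is the largest $k$ with $|V|>k$ such that deleting fewer than $k$ vertices leaves $G$ connected. *)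

From mathcomp Require Import all_boot.
Set Implicit Arguments. Unset Strict Implicit. Unset Printing Implicit Defensive.

(* A finite undirected multigraph without loops: each edge has two (distinct)
   ends; the orientation src/tgt carries no meaning (see [joins]). *)
Record mgraph := MGraph {
  vtx : finType;
  edg : finType;
  src : edg -> vtx;
  tgt : edg -> vtx;
  loopfree : forall e, src e != tgt e }.

Section Defs.
Variable G : mgraph.
Local Notation V := (vtx G).
Local Notation E := (edg G).

Definition joins (e : E) (u v : V) : bool :=
  ((src e == u) && (tgt e == v)) || ((src e == v) && (tgt e == u)).

Definition adj (F : {set E}) : rel V := fun u v => [exists e in F, joins e u v].

Definition connected_on (S : {set V}) (F : {set E}) : Prop :=
  forall u v, u \in S -> v \in S -> connect (adj F) u v.

Fixpoint walk (u : V) (es : seq E) (v : V) : Prop :=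
  match es with
  | [::] => u = v
  | e :: es' => exists w, joins e u w /\ walk w es' v
  end.

(* F is acyclic: no nonempty closed walk with pairwise distinct edges in F
   (in a loopless multigraph such a closed trail exists iff F has a cycle) *)
Definition acyclic (F : {set E}) : Prop :=
  ~ exists (u : V) (es : seq E),
      [/\ es <> [::], uniq es, all (fun e => e \in F) es & walk u es u].

Definition edges_within (S : {set V}) (F : {set E}) : Prop :=
  forall e, e \in F -> src e \in S /\ tgt e \in S.

Definition spanning_tree_of (S : {set V}) (F : {set E}) (T : {set E}) : Prop :=
  [/\ T \subset F, connected_on S T & acyclic T].

Definition bispanning_sub (S : {set V}) (F : {set E}) : Prop :=
  [/\ edges_within S F, S != set0 &
      exists T1 T2 : {set E},
        [/\ spanning_tree_of S F T1, spanning_tree_of S F T2,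
            [disjoint T1 & T2] & T1 :|: T2 = F]].

Definition bispanning : Prop := bispanning_sub setT setT.

Definition atomic : Prop :=
  bispanning /\
  forall (S : {set V}) (F : {set E}), bispanning_sub S F ->
    (S = setT /\ F = setT) \/ (#|S| = 1 /\ F = set0).

Definition edges_avoiding (X : {set V}) : {set E} :=
  [set e | (src e \notin X) && (tgt e \notin X)].

Definition ncomp (X : {set V}) : nat :=
  n_comp (adj (edges_avoiding X)) (~: X).

Definition vertex_cut (X : {set V}) : Prop := ncomp set0 < ncomp X.

Definition k_connected (k : nat) : Prop :=
  k < #|V| /\
  forall X : {set V}, #|X| < k -> connected_on (~: X) (edges_avoiding X).

Definition vertex_connectivity (k : nat) : Prop :=
  k_connected k /\ forall k', k_connected k' -> k' <= k.

Definition simple : Prop :=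
  forall e1 e2 : E, joins e2 (src e1) (tgt e1) -> e1 = e2.

End Defs.
Arguments vertex_cut : clear implicits.
Arguments vertex_connectivity : clear implicits.
Arguments joins {G} e u v.
Arguments atomic : clear implicits.
Arguments bispanning : clear implicits.
Arguments simple : clear implicits.

(* G is (isomorphic to) the graph obtained from the disjoint union of G1 and
   G2 by identifying src d1 with src d2 and tgt d1 with tgt d2 and deleting
   d1 and d2.  f is the quotient map on vertices, s identifies the edges of G
   with the edges of G1 + G2 other than d1, d2. *)
Definition two_clique_sum (G1 G2 : mgraph) (d1 : edg G1) (d2 : edg G2)
    (G : mgraph) : Prop :=
  let esrc (a : edg G1 + edg G2) : vtx G1 + vtx G2 :=
      match a with inl e => inl (src e) | inr e => inr (src e) end in
  let etgt (a : edg G1 + edg G2) : vtx G1 + vtx G2 :=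
      match a with inl e => inl (tgt e) | inr e => inr (tgt e) end in
  let glued (u w : vtx G1 + vtx G2) : Prop :=
      (u = inl (src d1) /\ w = inr (src d2)) \/
      (u = inl (tgt d1) /\ w = inr (tgt d2)) in
  exists (f : vtx G1 + vtx G2 -> vtx G) (s : edg G -> edg G1 + edg G2),
    [/\ forall v : vtx G, exists u, f u = v,
        forall u w, f u = f w <-> (u = w \/ glued u w \/ glued w u),
        injective s,
        forall a, (exists e, s e = a) <-> (a <> inl d1 /\ a <> inr d2) &
        forall e, joins e (f (esrc (s e))) (f (etgt (s e)))].

From mathcomp Require Import all_boot zify.
Set Implicit Arguments. Unset Strict Implicit. Unset Printing Implicit Defensive.

(* A forest on S with F edges has |S| - |F| components, so a bispanning
   graph has |E| = 2|V| - 2, and atomicity forces every proper vertex set S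
   with |S| >= 2 to span at most 2|S| - 3 edges: otherwise the traces of the
   two spanning trees on S would be spanning trees of G[S].  In particular G
   has no parallel edges.  A vertex cut {x, y} splits V into sides A and B
   with A ∩ B = {x, y} and every edge inside A or inside B, and the count
   2|V| - 2 <= (2|A| - 3) + (2|B| - 3) = 2|V| - 2 is tight: no edge lies in
   both sides (so none joins x and y), and one of the two trees traces a
   spanning tree on A.  That tree cannot also join x to y inside B, so its
   trace on B is a forest with two components separating x from y, which
   becomes a spanning tree of G[B] + xy; the other tree then traces a
   spanning tree on B, and symmetrically on A. *)

Section Forests.
Variable G : mgraph.
Local Notation V := (vtx G).
Local Notation E := (edg G).
Implicit Types (F : {set E}) (S : {set V}) (e : E) (u v w x y : V).

Lemma joinsC e u v : joins e u v = joins e v u.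
Proof. by rewrite /joins orbC. Qed.

Lemma joins_ends e : joins e (src e) (tgt e).
Proof. by rewrite /joins !eqxx. Qed.

Lemma adjC F : symmetric (adj F).
Proof.
move=> u v; apply/existsP/existsP => -[e /andP[eF j]];
by exists e; rewrite eF joinsC.
Qed.

Lemma connect_adjC F : connect_sym (adj F).
Proof. exact/sym_connect_sym/adjC. Qed.

Lemma adj_edge F e u v : e \in F -> joins e u v -> adj F u v.
Proof. by move=> eF j; apply/existsP; exists e; rewrite eF. Qed.

Lemma walk_cat u s1 s2 v :
  walk u (s1 ++ s2) v <-> exists w, walk u s1 w /\ walk w s2 v.
Proof.
elim: s1 u => [|e s1 IH] u /=.
  by split=> [h|[w [-> h]]] //; exists u.
split=> [[w [j /IH [w' [h1 h2]]]]|[w' [[w [j h1]] h2]]].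
  by exists w'; split=> //; exists w.
by exists w; split=> //; apply/IH; exists w'.
Qed.

Lemma walk_connect F u es v :
  all (fun e => e \in F) es -> walk u es v -> connect (adj F) u v.
Proof.
elim: es u => [|e es IH] u /=; first by move=> _ ->.
move=> /andP[eF aF] [w [j h]].
exact: connect_trans (connect1 (adj_edge eF j)) (IH _ aF h).
Qed.

(* The extra conjunct (all edges stay among the visited vertices) is what
   makes the edges of a vertex-simple path pairwise distinct. *)
Lemma path_trail F u p : path (adj F) u p -> uniq (u :: p) ->
  exists es, [/\ uniq es, all (fun e => e \in F) es, walk u es (last u p) &
    all (fun f => (src f \in u :: p) && (tgt f \in u :: p)) es].
Proof.
elim: p u => [|y p IH] u /=; first by move=> _ _; exists [::].
move=> /andP[/existsP[e /andP[eF j]] pth] /andP[nu un].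
have [es [ues aes wes ends]] := IH y pth un.
exists (e :: es); split=> /=.
- rewrite ues andbT; apply/negP => /(allP ends) /andP[s t].
  by case/orP: j => /andP[/eqP h1 /eqP h2]; move: nu; [rewrite -h1 s | rewrite -h2 t].
- by rewrite eF.
- by exists y.
- apply/andP; split.
    by case/orP: j => /andP[/eqP -> /eqP ->]; rewrite !inE !eqxx ?orbT.
  apply/allP => f /(allP ends) /andP[s t].
  by rewrite in_cons (in_cons u) s t !orbT.
Qed.

Lemma connect_trail F u v : connect (adj F) u v ->
  exists es, [/\ uniq es, all (fun e => e \in F) es & walk u es v].
Proof.
case/connectP => p pth ->; have [p' pth' up' _] := shortenP pth.
by have [es [? ? ? _]] := path_trail pth' up'; exists es.
Qed.

Lemma acyclicS F1 F2 : F1 \subset F2 -> acyclic F2 -> acyclic F1.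
Proof.
move=> sub ac [u [es [ne ues aes wes]]]; apply: ac; exists u, es; split=> //.
by apply/allP => e /(allP aes) /(subsetP sub).
Qed.

Definition component F z : {set V} := [set w | connect (adj F) z w].
Definition components S F : {set {set V}} := [set component F z | z in S].

Lemma mem_component F z : z \in component F z.
Proof. by rewrite inE connect0. Qed.

Lemma eq_component F a b : connect (adj F) a b -> component F a = component F b.
Proof.
move=> h; apply/setP => w; rewrite !inE.
exact: (same_connect (connect_adjC F) h).
Qed.

Lemma eq_component_connect F a b :
  component F a = component F b -> connect (adj F) a b.
Proof. by move=> h; move: (mem_component F b); rewrite -h inE. Qed.

Lemma card_components0 S : #|components S set0| = #|S|.
Proof.
have connect0E u v : connect (adj set0) u v = (u == v).
  apply/idP/eqP => [|->]; last exact: connect0.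
  by case/connectP => [[|z p]] //= /andP[/existsP[e]]; rewrite in_set0.
have -> : components S set0 = [set [set z] | z in S].
  by apply: eq_imset => z; apply/setP => w; rewrite !inE connect0E eq_sym.
exact/card_imset/set1_inj.
Qed.

Lemma connect_adjU1 F e a b :
  connect (adj (e |: F)) a b = [|| connect (adj F) a b,
     connect (adj F) a (src e) && connect (adj F) (tgt e) b |
     connect (adj F) a (tgt e) && connect (adj F) (src e) b].
Proof.
have mono c d : connect (adj F) c d -> connect (adj (e |: F)) c d.
  apply: connect_sub => c' d' /existsP[f /andP[fF j]]; apply: connect1.
  by apply: adj_edge j; rewrite in_setU1 fF orbT.
have st : connect (adj (e |: F)) (src e) (tgt e).
  by apply/connect1/(adj_edge (setU11 e F))/joins_ends.
apply/idP/idP; last first.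
  case/or3P => [/mono //|/andP[h1 h2]|/andP[h1 h2]].
    exact: connect_trans (mono _ _ h1) (connect_trans st (mono _ _ h2)).
  rewrite connect_adjC in st.
  exact: connect_trans (mono _ _ h1) (connect_trans st (mono _ _ h2)).
case/connectP => p pth ->; elim: p a pth => [|c p IH] a /=.
  by rewrite connect0.
case/andP => /existsP[f /andP[fin j]] /IH.
rewrite in_setU1 in fin; case/orP: fin => [/eqP ef|fF].
  rewrite ef in j; case/orP: j => /andP[/eqP <- /eqP <-];
  by case/or3P => [->|/andP[_ ->]|/andP[_ ->]]; rewrite ?connect0 ?orbT ?andbT.
have ac : connect (adj F) a c by apply/connect1/(adj_edge fF j).
case/or3P => [h|/andP[h3 h4]|/andP[h3 h4]].
- by rewrite (connect_trans ac h).
- by rewrite (connect_trans ac h3) h4 orbT.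
- by rewrite (connect_trans ac h3) h4 !orbT.
Qed.

Lemma componentU1 F e z : ~~ connect (adj F) (src e) (tgt e) ->
  component (e |: F) z =
    if connect (adj F) z (src e) || connect (adj F) z (tgt e)
    then component F (src e) :|: component F (tgt e) else component F z.
Proof.
move=> nc; apply/setP => w; rewrite inE connect_adjU1.
have nc' : connect (adj F) (tgt e) (src e) = false.
  by rewrite connect_adjC (negbTE nc).
case: ifP => h; rewrite !inE.
  case/orP: h => hz; rewrite !(same_connect (connect_adjC F) hz) connect0.
    by rewrite (negbTE nc) /= orbF.
  by rewrite nc' /= orbC.
by move/norP: h => [/negbTE -> /negbTE ->]; rewrite /= orbF.
Qed.

Lemma card_componentsU1 S F e : src e \in S -> tgt e \in S ->
  ~~ connect (adj F) (src e) (tgt e) ->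
  #|components S (e |: F)| + 1 = #|components S F|.
Proof.
move=> sS tS nc.
set Cs := component F (src e); set Ct := component F (tgt e).
have eqC : components S (e |: F) = (Cs :|: Ct) |: (components S F :\ Cs :\ Ct).
  apply/setP => K; rewrite in_setU1 !in_setD1; apply/imsetP/idP.
    case=> z zS ->; rewrite componentU1 //; case: ifP => h; first by rewrite eqxx.
    apply/orP; right; rewrite imset_f // andbT.
    by apply/andP; split; apply/negP => /eqP /eq_component_connect hc;
      rewrite hc ?orbT in h.
  case/orP => [/eqP ->|/and3P[nt ns /imsetP[z zS hK]]].
    by exists (src e) => //; rewrite componentU1 // connect0.
  subst K; exists z => //; rewrite componentU1 //.
  case: ifP => // /orP[] /eq_component hc.
    by rewrite hc eqxx in ns.
  by rewrite hc eqxx in nt.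
have CsCt : Ct != Cs.
  by apply/negP => /eqP /eq_component_connect h; rewrite connect_adjC h in nc.
rewrite eqC cardsU1.
have -> : Cs :|: Ct \notin components S F :\ Cs :\ Ct.
  apply/negP; rewrite !in_setD1 => /and3P[_ _ /imsetP[z _ hz]].
  have h1 : src e \in component F z by rewrite -hz in_setU mem_component.
  have h2 : tgt e \in component F z by rewrite -hz in_setU mem_component orbT.
  move: h1 h2; rewrite !inE => h1 h2; move/negP: nc; apply.
  by apply: connect_trans h2; rewrite connect_adjC.
rewrite [in RHS](cardsD1 Cs) [#|components S F :\ _|](cardsD1 Ct).
by rewrite imset_f // in_setD1 imset_f // andbT CsCt /= add1n addnC.
Qed.

Lemma card_forest S F : edges_within S F -> acyclic F ->
  #|F| + #|components S F| = #|S|.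
Proof.
move Hn: #|F| => n; elim: n F Hn => [|n IH] F Hn ew ac.
  by rewrite (cards0_eq Hn) card_components0.
have [e eF] : exists e, e \in F by apply/card_gt0P; rewrite Hn.
have eqF := setD1K eF; set F0 := F :\ e in eqF.
have sub0 : F0 \subset F by apply: subsetDl.
have n0 : #|F0| = n by move: Hn; rewrite (cardsD1 e) eF add1n => -[].
have nc : ~~ connect (adj F0) (src e) (tgt e).
  apply/negP => /connect_trail [es [ues aes wes]].
  apply: ac; exists (tgt e), (e :: es); split=> //.
  - by rewrite /= ues andbT; apply/negP => /(allP aes); rewrite !inE eqxx.
  - by rewrite /= eF; apply/allP => f /(allP aes) /(subsetP sub0).
  - by exists (src e); rewrite joinsC joins_ends.
have [sS tS] := ew e eF.
rewrite -(IH F0 n0 (fun f fF => ew f (subsetP sub0 f fF)) (acyclicS sub0 ac)).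
by rewrite -eqF -(card_componentsU1 sS tS nc) addnA addn1 addSn.
Qed.

Lemma components_gt0 S F : S != set0 -> 0 < #|components S F|.
Proof.
by case/set0Pn => z zS; apply/card_gt0P; exists (component F z); apply: imset_f.
Qed.

Lemma components_le1_connected S F :
  #|components S F| <= 1 -> connected_on S F.
Proof.
move=> /card_le1P h u v uS vS.
have := h _ (imset_f (component F) uS) (component F v).
rewrite imset_f // inE => /esym /eqP /eq_component_connect.
by rewrite connect_adjC.
Qed.

Lemma connected_components_le1 S F : connected_on S F -> #|components S F| <= 1.
Proof.
move=> c; apply/card_le1P => K /imsetP[z zS ->] L; rewrite inE.
apply/imsetP/eqP => [[w wS ->]|->]; last by exists z.
exact/eq_component/c.
Qed.

Lemma card_tree S F : edges_within S F -> acyclic F -> connected_on S F ->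
  S != set0 -> #|F| + 1 = #|S|.
Proof.
move=> ew ac c ne; rewrite -(card_forest ew ac).
by have := connected_components_le1 c; have := components_gt0 F ne;
  case: #|components S F| => [|[|]].
Qed.

Lemma card_forest_connected S F : edges_within S F -> acyclic F ->
  #|F| + 1 = #|S| -> connected_on S F.
Proof.
move=> ew ac; rewrite -(card_forest ew ac) => /addnI h.
by apply: components_le1_connected; rewrite h.
Qed.

Lemma card_forest_le S F : edges_within S F -> acyclic F -> S != set0 ->
  #|F| + 1 <= #|S|.
Proof.
by move=> ew ac ne; rewrite -(card_forest ew ac) leq_add2l components_gt0.
Qed.

Lemma card_forest_disconnected S F u v : edges_within S F -> acyclic F ->
  u \in S -> v \in S -> ~~ connect (adj F) u v -> #|F| + 2 <= #|S|.
Proof.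
move=> ew ac uS vS nc; rewrite -(card_forest ew ac) leq_add2l.
apply/card_gt1P; exists (component F u), (component F v).
split; try exact: imset_f.
by apply/negP => /eqP /eq_component_connect h; rewrite h in nc.
Qed.

Lemma acyclic_disjoint_connect (T P Q : {set E}) x y : acyclic T -> x != y ->
  P \subset T -> Q \subset T -> [disjoint P & Q] ->
  connect (adj P) x y -> connect (adj Q) x y -> False.
Proof.
move=> ac xy sP sQ dPQ /connect_trail[p [up ap wp]].
rewrite connect_adjC => /connect_trail[q [uq aq wq]].
apply: ac; exists x, (p ++ q); split.
- by case: p wp {up ap} => [/= h|]; [by rewrite h eqxx in xy|].
- rewrite cat_uniq up uq /= andbT; apply/hasPn => e /(allP aq) eQ.
  by apply/negP => /(allP ap) eP; rewrite (disjointFr dPQ eP) in eQ.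
- by rewrite all_cat; apply/andP; split; apply/allP => e;
    [move/(allP ap) /(subsetP sP) | move/(allP aq) /(subsetP sQ)].
- by apply/walk_cat; exists y.
Qed.

Definition edges_in S : {set E} := [set e | (src e \in S) && (tgt e \in S)].

Lemma edges_in_within S : edges_within S (edges_in S).
Proof. by move=> e; rewrite inE => /andP. Qed.

Lemma edges_withinS S F : F \subset edges_in S -> edges_within S F.
Proof. by move=> sub e /(subsetP sub) /edges_in_within. Qed.

Lemma partition_edges_in (T1 T2 : {set E}) S :
  [disjoint T1 & T2] -> T1 :|: T2 = setT ->
  [/\ [disjoint T1 :&: edges_in S & T2 :&: edges_in S],
      (T1 :&: edges_in S) :|: (T2 :&: edges_in S) = edges_in S &
      #|T1 :&: edges_in S| + #|T2 :&: edges_in S| = #|edges_in S|].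
Proof.
move=> dT uT.
have d : [disjoint T1 :&: edges_in S & T2 :&: edges_in S].
  by rewrite -setI_eq0 setIACA (disjoint_setI0 dT) set0I.
have u : (T1 :&: edges_in S) :|: (T2 :&: edges_in S) = edges_in S.
  by rewrite -setIUl uT setTI.
by split=> //; rewrite -cardsUI (disjoint_setI0 d) cards0 addn0 u.
Qed.

Lemma card_bispanning_sub S F : bispanning_sub S F -> #|F| + 2 = 2 * #|S|.
Proof.
case=> ew ne [T1 [T2 [[s1 c1 a1] [s2 c2 a2] dT uT]]].
have ewT (T : {set E}) : T \subset F -> edges_within S T by move=> sT e /(subsetP sT) /ew.
have cF : #|F| = #|T1| + #|T2|.
  by rewrite -uT -cardsUI (disjoint_setI0 dT) cards0 addn0.
have := card_tree (ewT _ s1) a1 c1 ne; have := card_tree (ewT _ s2) a2 c2 ne.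
lia.
Qed.

End Forests.

Section InducedPlusEdge.
Variables (G : mgraph) (S : {set vtx G}) (x y : vtx G).
Hypotheses (xS : x \in S) (yS : y \in S) (xy : x != y).

(* The induced subgraph G[S] together with one new edge ([None]) joining x and y. *)
Definition ip_vtx := {z : vtx G | z \in S}.
Definition ip_edg := option {e : edg G | e \in edges_in S}.

Definition ip_src (a : ip_edg) : ip_vtx :=
  if a is Some e then Sub (src (val e)) (edges_in_within (valP e)).1
  else Sub x xS.
Definition ip_tgt (a : ip_edg) : ip_vtx :=
  if a is Some e then Sub (tgt (val e)) (edges_in_within (valP e)).2
  else Sub y yS.

Lemma ip_loopfree a : ip_src a != ip_tgt a.
Proof. by case: a => [e|] /=; rewrite -val_eqE /= ?loopfree. Qed.

Definition induced_plus := MGraph ip_loopfree.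

Lemma joins_ip_old e (u w : ip_vtx) :
  @joins induced_plus (Some e) u w = joins (val e) (val u) (val w).
Proof. by rewrite /joins -!val_eqE. Qed.

Lemma joins_ip_new (u w : ip_vtx) :
  @joins induced_plus None u w =
  ((x == val u) && (y == val w)) || ((x == val w) && (y == val u)).
Proof. by rewrite /joins -!val_eqE. Qed.

Definition ip_orig (a : ip_edg) : option (edg G) := omap val a.

Lemma ip_origK : ocancel ip_orig insub.
Proof. by case=> [e|] //=; rewrite valK. Qed.

Lemma walk_ip_orig (u w : ip_vtx) es : None \notin es ->
  @walk induced_plus u es w -> walk (val u) (pmap ip_orig es) (val w).
Proof.
elim: es u => [|[a|] es IH] u //=; first by move=> _ ->.
rewrite in_cons /= => hN [w' [j h]]; exists (val w'); split.
  by rewrite -joins_ip_old.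
exact: IH.
Qed.

Lemma ip_closed_trail_old (R : {set edg G}) (es : seq ip_edg) (u : ip_vtx) :
  acyclic R -> es != [::] -> uniq es -> None \notin es ->
  (forall e, Some e \in es -> val e \in R) -> @walk induced_plus u es u -> False.
Proof.
move=> ac ne ues hN hR wes; apply: ac; exists (val u), (pmap ip_orig es); split.
- by case: es ne hN {ues hR wes} => [|[a|] es].
- exact: pmap_uniq ip_origK _ ues.
- apply/allP => e; rewrite mem_pmap => /mapP[[a|] ina] //= [->].
  exact: hR.
- exact: walk_ip_orig.
Qed.

Definition ip_lift (P : {set edg G}) : {set ip_edg} :=
  [set a : ip_edg | if a is Some e then val e \in P else false].
Definition ip_lift_new (Q : {set edg G}) : {set ip_edg} :=
  [set a : ip_edg | if a is Some e then val e \in Q else true].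

Lemma acyclic_ip_lift (P : {set edg G}) :
  acyclic P -> @acyclic induced_plus (ip_lift P).
Proof.
move=> ac [u [es [ne ues aes wes]]].
have hN : None \notin es by apply/negP => /(allP aes); rewrite inE.
apply: (ip_closed_trail_old ac _ ues hN _ wes); first exact/eqP.
by move=> e /(allP aes); rewrite inE.
Qed.

(* A cycle through the new edge would give a walk from y to x in Q. *)
Lemma acyclic_ip_lift_new (Q : {set edg G}) :
  acyclic Q -> ~~ connect (adj Q) x y -> @acyclic induced_plus (ip_lift_new Q).
Proof.
move=> ac nc [u [es [ne ues aes wes]]].
have inQ e : Some e \in es -> val e \in Q by move/(allP aes); rewrite inE.
have [hN|hN] := boolP (None \in es); last first.
  by apply: (ip_closed_trail_old ac _ ues hN inQ wes); apply/eqP.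
case/splitPr: hN ues inQ aes wes => es1 es2 ues inQ _ /walk_cat [w [w1 [w' [j w2]]]].
have hN : None \notin es2 ++ es1.
  by move: ues; rewrite uniq_catC /= => /andP[].
have w3 : @walk induced_plus w' (es2 ++ es1) w by apply/walk_cat; exists u.
have aQ : all (fun e => e \in Q) (pmap ip_orig (es2 ++ es1)).
  apply/allP => e; rewrite mem_pmap => /mapP[[a|] ina] //= [->]; apply: inQ.
  by move: ina; rewrite !mem_cat in_cons => /orP[] ->; rewrite ?orbT.
have := walk_connect aQ (walk_ip_orig hN w3).
rewrite joins_ip_new in j; case/orP: j => /andP[/eqP <- /eqP <-] h.
  by rewrite connect_adjC h in nc.
by rewrite h in nc.
Qed.

Lemma card_ip_edges (P : {set edg G}) : P \subset edges_in S ->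
  #|[set e : {e : edg G | e \in edges_in S} | val e \in P]| = #|P|.
Proof.
move=> sub; rewrite -(card_imset _ val_inj); apply: eq_card => e.
apply/imsetP/idP => [[a]|eP]; first by rewrite inE => h ->.
by exists (Sub e (subsetP sub e eP)); rewrite ?inE SubK.
Qed.

Lemma card_ip_lift (P : {set edg G}) : P \subset edges_in S ->
  #|ip_lift P| = #|P|.
Proof.
move=> sub; rewrite -(card_ip_edges sub).
set L := [set e : {e : edg G | e \in edges_in S} | val e \in P].
rewrite -(card_imset L (@Some_inj _)).
apply: eq_card => -[a|]; rewrite !inE; last by apply/esym/imsetP => -[].
by rewrite (mem_imset _ _ (@Some_inj _)) inE.
Qed.

Lemma card_ip_lift_new (Q : {set edg G}) : Q \subset edges_in S ->
  #|ip_lift_new Q| = #|Q|.+1.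
Proof.
move=> sub; rewrite -(card_ip_edges sub).
set L := [set e : {e : edg G | e \in edges_in S} | val e \in Q].
rewrite -(card_imset L (@Some_inj _)).
have -> : ip_lift_new Q = None |: Some @: L.
  apply/setP => -[a|]; rewrite !inE //.
  by rewrite (mem_imset _ _ (@Some_inj _)) inE.
by rewrite cardsU1; case: imsetP => // -[].
Qed.

Lemma card_ip_vtx : #|[set: ip_vtx]| = #|S|.
Proof. by rewrite cardsT card_sig. Qed.

Lemma bispanning_induced_plus (P Q : {set edg G}) :
  [disjoint P & Q] -> P :|: Q = edges_in S ->
  acyclic P -> acyclic Q -> #|P| + 1 = #|S| -> #|Q| + 2 = #|S| ->
  ~~ connect (adj Q) x y -> bispanning induced_plus.
Proof.
move=> dPQ uPQ acP acQ cP cQ nc.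
have [sP sQ] : P \subset edges_in S /\ Q \subset edges_in S.
  by rewrite -uPQ subsetUl subsetUr.
split=> //; first by apply/set0Pn; exists (Sub x xS : ip_vtx); rewrite inE.
exists (ip_lift P), (ip_lift_new Q); split.
- split; [exact: subsetT | | exact: acyclic_ip_lift].
  apply: card_forest_connected (acyclic_ip_lift acP) _ => //.
  by rewrite card_ip_lift // card_ip_vtx.
- split; [exact: subsetT | | exact: acyclic_ip_lift_new].
  apply: card_forest_connected (acyclic_ip_lift_new acQ nc) _ => //.
  by rewrite card_ip_lift_new // card_ip_vtx -cQ addn1 addn2.
- rewrite -setI_eq0; apply/eqP/setP => -[a|]; rewrite !inE //.
  by apply/negP => /andP[h1 h2]; rewrite (disjointFr dPQ h1) in h2.
- apply/setP => -[a|]; rewrite !inE //.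
  by have := valP a; move: (val a) => e; rewrite -uPQ inE.
Qed.

Lemma simple_induced_plus :
  (forall e : edg G, ~~ joins e x y) -> simple G -> simple induced_plus.
Proof.
move=> noxy simG [a|] [b|] //=.
- by rewrite joins_ip_old /= => /simG /val_inj ->.
- rewrite joins_ip_new /= => /orP[]/andP[/eqP h1 /eqP h2]; move: (noxy (val a)).
    by rewrite h1 h2 joins_ends.
  by rewrite h1 h2 joinsC joins_ends.
- by rewrite joins_ip_old /= => h; move: (noxy (val b)); rewrite h.
Qed.

End InducedPlusEdge.

Section Atomic.
Variable G : mgraph.
Local Notation V := (vtx G).
Local Notation E := (edg G).
Hypothesis atG : atomic G.

Lemma atomic_sparse (S : {set V}) : S != setT -> 1 < #|S| ->
  #|edges_in S| + 3 <= 2 * #|S|.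
Proof.
move=> nT S2; case: atG => [[_ _ [T1 [T2 [[_ _ ac1] [_ _ ac2] dT uT]]]] atomS].
have [d u cE] := partition_edges_in S dT uT.
set P1 := T1 :&: _ in d u cE; set P2 := T2 :&: _ in d u cE.
have [sP1 sP2] : P1 \subset edges_in S /\ P2 \subset edges_in S.
  by rewrite -u subsetUl subsetUr.
have a1 : acyclic P1 by apply: acyclicS ac1; apply: subsetIl.
have a2 : acyclic P2 by apply: acyclicS ac2; apply: subsetIl.
have ne : S != set0 by rewrite -card_gt0 ltnW.
have l1 := card_forest_le (edges_withinS sP1) a1 ne.
have l2 := card_forest_le (edges_withinS sP2) a2 ne.
have [/eqP h1|] := boolP (#|P1| + 1 == #|S|); last lia.
have [/eqP h2|] := boolP (#|P2| + 1 == #|S|); last lia.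
have tree (P : {set E}) : P \subset edges_in S -> acyclic P -> #|P| + 1 = #|S| ->
    spanning_tree_of S (edges_in S) P.
  by move=> sP aP cP; split=> //; apply: card_forest_connected (edges_withinS sP) aP cP.
have bS : bispanning_sub S (edges_in S).
  split; [exact: edges_in_within | exact: ne |].
  by exists P1, P2; split; [apply: tree | apply: tree | |].
case: (atomS _ _ bS) => [[hS _]|[hS _]]; first by rewrite hS eqxx in nT.
by rewrite hS in S2.
Qed.

Lemma atomic_simple : 2 < #|V| -> simple G.
Proof.
move=> V3 e1 e2 j; apply/eqP/negPn/negP => ne.
set S := [set src e1; tgt e1].
have cS : #|S| = 2 by rewrite cards2 loopfree.
have nT : S != setT by apply: contraTneq V3 => hS; rewrite -cardsT -hS cS.
have sub : [set e1; e2] \subset edges_in S.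
  apply/subsetP => e; rewrite !inE => /orP[]/eqP->; rewrite ?eqxx ?orbT //.
  by case/orP: j => /andP[/eqP -> /eqP ->]; rewrite !eqxx ?orbT.
have := subset_leq_card sub; have := atomic_sparse nT.
by rewrite cards2 ne cS; lia.
Qed.

End Atomic.

Section Separation.
Variable G : mgraph.
Local Notation V := (vtx G).
Local Notation E := (edg G).

Definition separation (A B X : {set V}) : Prop :=
  [/\ A :&: B = X, A :|: B = setT, A != setT, B != setT &
      forall e : E, (e \in edges_in A) || (e \in edges_in B)].

Lemma vertex_cut_disconnected (X : {set V}) : vertex_cut G X ->
  exists r1 r2, [/\ r1 \notin X, r2 \notin X &
                    ~~ connect (adj (edges_avoiding X)) r1 r2].
Proof.
move=> cut; rewrite /vertex_cut /ncomp /n_comp_mem in cut.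
have /card_gt0P[z _] := leq_ltn_trans (leq0n _) cut.
have /card_gt1P[r1 [r2 []]] : 1 < #|[predI roots (adj (edges_avoiding X)) & ~: X]|.
  apply: leq_ltn_trans cut; apply/card_gt0P; exists (root (adj (edges_avoiding set0)) z).
  by rewrite inE /= (roots_root (connect_adjC _)) in_setC in_set0.
rewrite !inE /= => /andP[rt1 nX1] /andP[rt2 nX2] ne12.
exists r1, r2; split=> //; apply: contra ne12 => /(rootP (connect_adjC _)) h.
by rewrite -(eqP rt1) -(eqP rt2) h.
Qed.

(* A is the component of r1 in G - X together with X. *)
Lemma disconnected_separation (X : {set V}) r1 r2 : r1 \notin X -> r2 \notin X ->
  ~~ connect (adj (edges_avoiding X)) r1 r2 -> exists A B, separation A B X.
Proof.
move=> nX1 nX2 nc; set R := adj (edges_avoiding X).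
set C := [set w | (w \notin X) && connect R r1 w].
have CX w : w \in C -> w \notin X by rewrite inE => /andP[].
have closedC e u w : joins e u w -> u \in C -> w \notin X -> w \in C.
  move=> j; rewrite inE => /andP[uX cu] wX; rewrite inE wX.
  apply: (connect_trans cu); apply/connect1/(adj_edge _ j).
  by rewrite inE; case/orP: j => /andP[/eqP -> /eqP ->]; rewrite uX wX.
have r1C : r1 \in C by rewrite inE nX1 connect0.
have r2C : r2 \notin C by rewrite inE negb_and nc orbT.
clearbody C.
exists (C :|: X), (~: C); split.
- apply/setP => w; rewrite in_setI in_setU in_setC.
  case wC: (w \in C); case wX: (w \in X) => //=.
  by move: (CX _ wC); rewrite wX.
- by apply/setP => w; rewrite !in_setU in_setC in_setT orbAC orbN.
- by apply/negP => /eqP/setP/(_ r2); rewrite !inE (negbTE r2C) (negbTE nX2).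
- by apply/negP => /eqP/setP/(_ r1); rewrite !inE r1C.
- move=> e; rewrite !inE.
  case sC: (src e \in C); case tC: (tgt e \in C) => //=; rewrite ?orbT ?andbT ?orbF //.
    apply/negP => /negP tX.
    by move: (closedC e _ _ (joins_ends e) sC tX); rewrite tC.
  apply/negP => /negP sX; have je : joins e (tgt e) (src e) by rewrite joinsC joins_ends.
  by move: (closedC e _ _ je tC sX); rewrite sC.
Qed.

Lemma tree_trace_transfer (Ta Tb : {set E}) (A B : {set V}) (x y : V) :
  x \in A -> y \in A -> x \in B -> y \in B -> x != y ->
  acyclic Ta -> acyclic Tb -> [disjoint Ta & Tb] -> Ta :|: Tb = setT ->
  [disjoint edges_in A & edges_in B] -> #|edges_in B| + 3 = 2 * #|B| ->
  #|Ta :&: edges_in A| + 1 = #|A| ->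
  [/\ ~~ connect (adj (Ta :&: edges_in B)) x y,
      #|Ta :&: edges_in B| + 2 = #|B| & #|Tb :&: edges_in B| + 1 = #|B|].
Proof.
move=> xA yA xB yB xy acTa acTb dT uT dAB cB hA.
have [_ _ sumB] := partition_edges_in B dT uT.
have acA : acyclic (Ta :&: edges_in A) by apply: acyclicS acTa; apply: subsetIl.
have acB : acyclic (Ta :&: edges_in B) by apply: acyclicS acTa; apply: subsetIl.
have acTbB : acyclic (Tb :&: edges_in B) by apply: acyclicS acTb; apply: subsetIl.
have cA := card_forest_connected (edges_withinS (subsetIr _ _)) acA hA.
have ncB : ~~ connect (adj (Ta :&: edges_in B)) x y.
  apply/negP => cxyB; apply: acyclic_disjoint_connect acTa xy _ _ _ (cA x y xA yA) cxyB.
  - exact: subsetIl.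
  - exact: subsetIl.
  by rewrite -setI_eq0 setIACA setIid (disjoint_setI0 dAB) setI0.
have lB := card_forest_disconnected (edges_withinS (subsetIr _ _)) acB xB yB ncB.
have neB : B != set0 by apply/set0Pn; exists x.
have lTbB := card_forest_le (edges_withinS (subsetIr _ _)) acTbB neB.
by split=> //; lia.
Qed.

Variables (x y : V) (A B : {set V}).
Hypotheses (sepAB : separation A B [set x; y]) (xy : x != y).

Lemma separator_in_sides z : z \in [set x; y] -> z \in A /\ z \in B.
Proof. by case: sepAB => <- _ _ _ _; rewrite inE => /andP. Qed.

Lemma separator_xA : x \in A. Proof. by case: (separator_in_sides (set21 x y)). Qed.
Lemma separator_yA : y \in A. Proof. by case: (separator_in_sides (set22 x y)). Qed.
Lemma separator_xB : x \in B. Proof. by case: (separator_in_sides (set21 x y)). Qed.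
Lemma separator_yB : y \in B. Proof. by case: (separator_in_sides (set22 x y)). Qed.

Lemma atomic_separation_tight : atomic G ->
  [/\ [disjoint edges_in A & edges_in B],
      #|edges_in A| + 3 = 2 * #|A| & #|edges_in B| + 3 = 2 * #|B|].
Proof.
move=> atG; case: sepAB => hAB uAB nTA nTB cover.
have cE := card_bispanning_sub atG.1.
have cEAB : #|edges_in A :|: edges_in B| = #|[set: E]|.
  by apply: eq_card => e; rewrite in_setU cover inE.
have cAB : #|A| + #|B| = #|[set: V]| + 2.
  by rewrite -cardsUI uAB hAB cards2 xy.
have A2 : 1 < #|A| by apply/card_gt1P; exists x, y; rewrite separator_xA separator_yA.
have B2 : 1 < #|B| by apply/card_gt1P; exists x, y; rewrite separator_xB separator_yB.
have sA := atomic_sparse atG nTA A2; have sB := atomic_sparse atG nTB B2.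
have hI := cardsUI (edges_in A) (edges_in B).
have [/cards0_eq dAB [cA cB]] : #|edges_in A :&: edges_in B| = 0 /\
    #|edges_in A| + 3 = 2 * #|A| /\ #|edges_in B| + 3 = 2 * #|B| by lia.
by split=> //; rewrite -setI_eq0 dAB.
Qed.

Lemma atomic_separator_nonadjacent : atomic G -> forall e : E, ~~ joins e x y.
Proof.
case/atomic_separation_tight => dAB _ _ e; apply/negP => j.
have eAB : (e \in edges_in A) && (e \in edges_in B).
  rewrite !inE; case/orP: j => /andP[/eqP -> /eqP ->];
  by rewrite separator_xA separator_yA separator_xB separator_yB.
by case/andP: eAB => eA; rewrite (disjointFr dAB eA).
Qed.

Definition side_A := induced_plus separator_xA separator_yA xy.
Definition side_B := induced_plus separator_xB separator_yB xy.

Definition glue_vtx (s : vtx side_A + vtx side_B) : V :=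
  match s with inl a => val a | inr b => val b end.

(* The fallback value [inl None] is never taken, since every edge lies in A or B. *)
Definition glue_edg (e : E) : edg side_A + edg side_B :=
  if insub e is Some a then inl (Some a)
  else if insub e is Some b then inr (Some b) else inl None.

Lemma glue_edgP e :
  (exists2 a : {e0 : E | e0 \in edges_in A}, glue_edg e = inl (Some a) & val a = e) \/
  (exists2 b : {e0 : E | e0 \in edges_in B}, glue_edg e = inr (Some b) & val b = e).
Proof.
rewrite /glue_edg; case: insubP => [a _ ea|na]; first by left; exists a.
case: insubP => [b _ eb|nb]; first by right; exists b.
by case: sepAB => _ _ _ _ /(_ e); rewrite (negbTE na) (negbTE nb).
Qed.

Lemma two_clique_sum_sides : [disjoint edges_in A & edges_in B] ->
  two_clique_sum (None : edg side_A) (None : edg side_B) G.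
Proof.
move=> dAB; case: sepAB => hAB uAB _ _ _.
exists glue_vtx, glue_edg; split.
- move=> v; have : v \in A :|: B by rewrite uAB inE.
  rewrite inE => /orP[vA|vB]; first by exists (inl (Sub v vA : vtx side_A)).
  by exists (inr (Sub v vB : vtx side_B)).
- have inX v : v \in A -> v \in B -> (v == x) || (v == y).
    move=> vA vB; have : v \in A :&: B by rewrite inE vA vB.
    by rewrite hAB !inE.
  move=> u w; split; last first.
    by case=> [->|[[[-> ->]|[-> ->]]|[[-> ->]|[-> ->]]]].
  case: u w => [a|b] [a'|b'] /= h.
  + by left; congr inl; apply: val_inj.
  + have vB : val a \in B by move: (valP b') => /=; rewrite -h.
    have := inX _ (valP a) vB; rewrite /= => /orP[]/eqP hx;
      right; left; [left|right]; split; congr (_ _); apply: val_inj => /=;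
      by rewrite -?h hx.
  + have vA : val b \in A by move: (valP a') => /=; rewrite h.
    have := inX _ vA (valP b); rewrite /= => /orP[]/eqP hx;
      right; right; [left|right]; split; congr (_ _); apply: val_inj => /=;
      by rewrite -?h hx.
  + by left; congr inr; apply: val_inj.
- move=> e1 e2 h.
  case: (glue_edgP e1) => [[a h1 <-]|[b h1 <-]];
  case: (glue_edgP e2) => [[a' h2 <-]|[b' h2 <-]];
  rewrite h1 h2 in h; try discriminate; by case: h => ->.
- move=> a; split.
    by case=> e <-; case: (glue_edgP e) => [[a' -> _]|[b' -> _]].
  case: a => [[a|]|[b|]] [h1 h2] //; [exists (val a) | exists (val b)].
    rewrite /glue_edg; case: insubP => [a' _ ea'|na]; last by rewrite (valP a) in na.
    by congr (inl (Some _)); apply: val_inj.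
  rewrite /glue_edg; case: insubP => [a' _ ea'|_].
    by have := valP a'; rewrite ea' (disjointFl dAB (valP b)).
  case: insubP => [b' _ eb'|nb]; last by rewrite (valP b) in nb.
  by congr (inr (Some _)); apply: val_inj.
- by move=> e; case: (glue_edgP e) => [[a -> <-]|[b -> <-]] /=; apply: joins_ends.
Qed.

Lemma bispanning_sides (Ta Tb : {set E}) :
  [disjoint edges_in A & edges_in B] ->
  #|edges_in A| + 3 = 2 * #|A| -> #|edges_in B| + 3 = 2 * #|B| ->
  acyclic Ta -> acyclic Tb -> [disjoint Ta & Tb] -> Ta :|: Tb = setT ->
  #|Ta :&: edges_in A| + 1 = #|A| -> bispanning side_A /\ bispanning side_B.
Proof.
move=> dAB cA cB acTa acTb dT uT hA.
have [xA yA xB yB] := And4 separator_xA separator_yA separator_xB separator_yB.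
have dT' : [disjoint Tb & Ta] by rewrite disjoint_sym.
have uT' : Tb :|: Ta = setT by rewrite setUC.
have dBA : [disjoint edges_in B & edges_in A] by rewrite disjoint_sym.
have [ncB hB' hB] := tree_trace_transfer xA yA xB yB xy acTa acTb dT uT dAB cB hA.
have [ncA hA' _] := tree_trace_transfer xB yB xA yA xy acTb acTa dT' uT' dBA cA hB.
have [dA uA _] := partition_edges_in A dT uT.
have [dB uB _] := partition_edges_in B dT' uT'.
have acyclicI (T : {set E}) S : acyclic T -> acyclic (T :&: edges_in S).
  by apply: acyclicS; apply: subsetIl.
split.
- exact: bispanning_induced_plus dA uA (acyclicI _ _ acTa) (acyclicI _ _ acTb) hA hA' ncA.
- exact: bispanning_induced_plus dB uB (acyclicI _ _ acTb) (acyclicI _ _ acTa) hB hB' ncB.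
Qed.

Lemma tree_trace_exists (T1 T2 : {set E}) :
  acyclic T1 -> acyclic T2 -> [disjoint T1 & T2] -> T1 :|: T2 = setT ->
  #|edges_in A| + 3 = 2 * #|A| ->
  #|T1 :&: edges_in A| + 1 = #|A| \/ #|T2 :&: edges_in A| + 1 = #|A|.
Proof.
move=> ac1 ac2 dT uT cA; have [_ _ sumA] := partition_edges_in A dT uT.
have neA : A != set0 by apply/set0Pn; exists x; apply: separator_xA.
have ac1A : acyclic (T1 :&: edges_in A) by apply: acyclicS ac1; apply: subsetIl.
have ac2A : acyclic (T2 :&: edges_in A) by apply: acyclicS ac2; apply: subsetIl.
have l1 := card_forest_le (edges_withinS (subsetIr _ _)) ac1A neA.
have l2 := card_forest_le (edges_withinS (subsetIr _ _)) ac2A neA.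
lia.
Qed.

Lemma atomic_separation_two_clique_sum : atomic G -> 2 < #|V| ->
  exists (G1 G2 : mgraph) (d1 : edg G1) (d2 : edg G2),
    [/\ simple G1, simple G2, bispanning G1, bispanning G2 & two_clique_sum d1 d2 G].
Proof.
move=> atG V3; have [dAB cA cB] := atomic_separation_tight atG.
have noxy := atomic_separator_nonadjacent atG.
have simG := atomic_simple atG V3.
case: (atG) => [[_ _ [T1 [T2 [[_ _ ac1] [_ _ ac2] dT uT]]]] _].
have [bA bB] : bispanning side_A /\ bispanning side_B.
  case: (tree_trace_exists ac1 ac2 dT uT cA) => h.
    exact: bispanning_sides dAB cA cB ac1 ac2 dT uT h.
  by apply: bispanning_sides dAB cA cB ac2 ac1 _ _ h; rewrite 1?disjoint_sym 1?setUC.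
exists side_A, side_B, None, None.
split; [exact: simple_induced_plus | exact: simple_induced_plus | done | done |].
exact: two_clique_sum_sides.
Qed.

End Separation.

Theorem mainTheorem10 (G : mgraph) :
  atomic G -> vertex_connectivity G 2 ->
  forall x y : vtx G, vertex_cut G [set x; y] ->
    (forall e : edg G, ~~ joins e x y) /\
    exists (G1 G2 : mgraph) (d1 : edg G1) (d2 : edg G2),
      [/\ simple G1, simple G2, bispanning G1, bispanning G2 &
          two_clique_sum d1 d2 G].
Proof.
move=> atG [[V3 conn2] _] x y cut.
have [r1 [r2 [nX1 nX2 nc]]] := vertex_cut_disconnected cut.
have xy : x != y.
  apply/negP => /eqP exy; move/negP: nc; apply.
  by apply: conn2; rewrite ?in_setC // exy setUid cards1.
have [A [B sepAB]] := disconnected_separation nX1 nX2 nc.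
split; first exact: atomic_separator_nonadjacent sepAB xy atG.
exact: atomic_separation_two_clique_sum sepAB xy atG V3.
Qed.
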